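(* Let $\Bbbk$ be a field of characteristic $0$ and $X$ a set. Then $\mathrm{DiSJ}\langle X\rangle$ is the free dialgebra on $X$ in the class $\mathrm{HomDiSJ}$: it belongs to $\mathrm{HomDiSJ}$, and for every $J'\in\mathrm{HomDiSJ}$ every map $X\to J'$ extends to a homomorphism $\mathrm{DiSJ}\langle X\rangle\to J'$.
   Context: An associative dialgebra is a vector space with bilinear $\vdash,\dashv$ satisfying $(x\dashv y)\vdash z=(x\vdash y)\vdash z$, $x\dashv(y\vdash z)=x\dashv(y\dashv z)$, $(x\vdash y)\vdash z=x\vdash(y\vdash z)$, $(x\dashv y)\dashv z=x\dashv(y\dashv z)$, $(x\vdash y)\dashv z=x\vdash(y\dashv z)$; $\mathrm{DiAs}\langle X\rangle$ is the free associative dialgebra. $D^{(+)}$ is $D$ with $a\vdash_+b=\tfrac12(a\vdash b+b\dashv a)$, $a\dashv_+b=\tfrac12(a\dashv b+b\vdash a)$. $\mathrm{DiSJ}\langle X\rangle$ is the subdialgebra of $\mathrm{DiAs}\langle X\rangle^{(+)}$ generated by $X$. A special Jordan dialgebra is a subdialgebra of some $D^{(+)}$ with $D$ associative; $\mathrm{HomDiSJ}$ is the class of homomorphic images of special Jordan dialgebras. *)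

From HB Require Import structures.
From mathcomp Require Import all_boot all_order all_algebra.
Set Implicit Arguments. Unset Strict Implicit. Unset Printing Implicit Defensive.
Import GRing.Theory.
Local Open Scope ring_scope.

(* A dialgebra is represented as a subspace S of an ambient k-vector space V,
   together with two operations  dl (= "|-")  and  dr (= "-|").  The operations
   only matter on S.  A dialgebra in the usual sense is the case S = everything. *)
Record dialg (k : fieldType) := Dialg {
  dcar : lmodType k;
  dsub : dcar -> Prop;
  dl : dcar -> dcar -> dcar;
  dr : dcar -> dcar -> dcar
}.
Arguments Dialg {k}.
Arguments dcar {k} d.
Arguments dsub {k} d _.
Arguments dl {k} d _ _.
Arguments dr {k} d _ _.

Section DefsSec.
Variable k : fieldType.

Definition closed_dialg (J : dialg k) : Prop :=
  dsub J 0 /\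
  (forall (a : k) x y, dsub J x -> dsub J y -> dsub J (a *: x + y)) /\
  (forall x y, dsub J x -> dsub J y -> dsub J (dl J x y)) /\
  (forall x y, dsub J x -> dsub J y -> dsub J (dr J x y)).

Definition is_dialg (J : dialg k) : Prop :=
  closed_dialg J /\
  (forall (a : k) x y z, dsub J x -> dsub J y -> dsub J z ->
     dl J (a *: x + y) z = a *: dl J x z + dl J y z /\
     dl J z (a *: x + y) = a *: dl J z x + dl J z y /\
     dr J (a *: x + y) z = a *: dr J x z + dr J y z /\
     dr J z (a *: x + y) = a *: dr J z x + dr J z y).

Definition is_assoc_dialg (J : dialg k) : Prop :=
  is_dialg J /\
  forall x y z, dsub J x -> dsub J y -> dsub J z ->
    dl J (dr J x y) z = dl J (dl J x y) z /\
    dr J x (dl J y z) = dr J x (dr J y z) /\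
    dl J (dl J x y) z = dl J x (dl J y z) /\
    dr J (dr J x y) z = dr J x (dr J y z) /\
    dr J (dl J x y) z = dl J x (dr J y z).

(* homomorphism of dialgebras J1 -> J2 (given as a map on the ambient space,
   only its values on dsub J1 matter) *)
Definition dialg_hom (J1 J2 : dialg k) (f : dcar J1 -> dcar J2) : Prop :=
  (forall x, dsub J1 x -> dsub J2 (f x)) /\
  (forall (a : k) x y, dsub J1 x -> dsub J1 y -> f (a *: x + y) = a *: f x + f y) /\
  (forall x y, dsub J1 x -> dsub J1 y -> f (dl J1 x y) = dl J2 (f x) (f y)) /\
  (forall x y, dsub J1 x -> dsub J1 y -> f (dr J1 x y) = dr J2 (f x) (f y)).
Arguments dialg_hom : clear implicits.

Definition full_dialg (V : lmodType k) (l r : V -> V -> V) : dialg k :=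
  Dialg V (fun _ => True) l r.

(* the subset S of D^(+):  a |-_+ b = 1/2 (a |- b + b -| a),
                           a -|_+ b = 1/2 (a -| b + b |- a) *)
Definition plus_dialg (V : lmodType k) (l r : V -> V -> V) (S : V -> Prop) : dialg k :=
  Dialg V S (fun a b => 2%:R^-1 *: (l a b + r b a))
            (fun a b => 2%:R^-1 *: (r a b + l b a)).

Definition is_free_DiAs (X : Type) (D : lmodType k) (l r : D -> D -> D)
    (iota : X -> D) : Prop :=
  is_assoc_dialg (full_dialg l r) /\
  forall (A : lmodType k) (al ar : A -> A -> A),
    is_assoc_dialg (full_dialg al ar) ->
    forall g : X -> A,
      exists! h : D -> A,
        dialg_hom (full_dialg l r) (full_dialg al ar) h /\
        forall x, h (iota x) = g x.

Definition gen_plus (V : lmodType k) (l r : V -> V -> V) (E : V -> Prop) : V -> Prop :=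
  fun v => forall P : V -> Prop,
    closed_dialg (plus_dialg l r P) -> (forall e, E e -> P e) -> P v.

Definition DiSJ (X : Type) (D : lmodType k) (l r : D -> D -> D) (iota : X -> D) : dialg k :=
  plus_dialg l r (gen_plus l r (fun v => exists x, v = iota x)).

(* HomDiSJ: homomorphic images of special Jordan dialgebras, i.e. of
   subdialgebras of A^(+) with A an associative dialgebra *)
Definition HomDiSJ (J : dialg k) : Prop :=
  is_dialg J /\
  exists (A : lmodType k) (l r : A -> A -> A) (S : A -> Prop),
    is_assoc_dialg (full_dialg l r) /\
    is_dialg (plus_dialg l r S) /\
    exists f : A -> dcar J,
      dialg_hom (plus_dialg l r S) J f /\
      (forall y, dsub J y -> exists x, S x /\ f x = y).

End DefsSec.
Arguments dialg_hom {k} J1 J2 f.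

From HB Require Import structures.
From mathcomp Require Import all_boot all_order all_algebra.
From Stdlib Require Import ClassicalEpsilon.
Set Implicit Arguments. Unset Strict Implicit. Unset Printing Implicit Defensive.
Local Open Scope ring_scope.
Import GRing.Theory.

(* DiSJ<X> is a subdialgebra of DiAs<X>^(+), hence special, hence in
   HomDiSJ.  Given J' = f(S) with S a subdialgebra of A^(+), lift each g x to a
   preimage in S and extend it, by freeness of DiAs<X>, to an associative dialgebra
   morphism h : DiAs<X> -> A.  Then h is also a morphism of the (+)-dialgebras,
   so it maps the (+)-subdialgebra generated by X into S, and f \o h is the
   required extension. *)

Section PlusDialgebras.
Variable k : fieldType.

Lemma scalerDACA (V : lmodType k) (c a : k) (p q u w : V) :
  c *: (a *: p + q + (a *: u + w)) = a *: (c *: (p + u)) + c *: (q + w).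
Proof. by rewrite !scalerDr !scalerA [c * a]mulrC addrACA. Qed.

Lemma plus_dialg_is_dialg (V : lmodType k) (l r : V -> V -> V) (S : V -> Prop) :
  is_dialg (full_dialg l r) -> closed_dialg (plus_dialg l r S) ->
  is_dialg (plus_dialg l r S).
Proof.
move=> [_ bilin] closedS; split => // a x y z _ _ _ /=.
have [/= -> [/= -> [/= -> /= ->]]] := bilin a x y z I I I.
by rewrite !scalerDACA.
Qed.

Lemma gen_plus_closed (V : lmodType k) (l r : V -> V -> V) (E : V -> Prop) :
  closed_dialg (plus_dialg l r (gen_plus l r E)).
Proof.
split; [|split; [|split]] => /=.
- by move=> P [P0 _] _.
- by move=> a x y Gx Gy P PP PE; apply: (proj1 (proj2 PP)); [apply: Gx|apply: Gy].
- by move=> x y Gx Gy P PP PE; apply: (proj1 (proj2 (proj2 PP))); [apply: Gx|apply: Gy].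
- by move=> x y Gx Gy P PP PE; apply: (proj2 (proj2 (proj2 PP))); [apply: Gx|apply: Gy].
Qed.

Lemma comb_linear0 (A B : lmodType k) (h : A -> B) :
  (forall (a : k) x y, h (a *: x + y) = a *: h x + h y) -> h 0 = 0.
Proof.
move=> hlin; have := hlin 1 0 0; rewrite scaler0 addr0 scale1r => h00.
by apply: (addrI (h 0)); rewrite addr0 -h00.
Qed.

Lemma comb_linear_scaleD (A B : lmodType k) (h : A -> B) (c : k) (u v : A) :
  (forall (a : k) x y, h (a *: x + y) = a *: h x + h y) ->
  h (c *: (u + v)) = c *: (h u + h v).
Proof.
move=> hlin; have h0 := comb_linear0 hlin.
have hscale a x : h (a *: x) = a *: h x by rewrite -[a *: x]addr0 hlin h0 addr0.
by rewrite hscale -[u]scale1r hlin !scale1r.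
Qed.

Lemma dialg_hom_comp (J1 J2 J3 : dialg k) (f : dcar J1 -> dcar J2)
    (g : dcar J2 -> dcar J3) :
  dialg_hom J1 J2 f -> dialg_hom J2 J3 g -> dialg_hom J1 J3 (g \o f).
Proof.
move=> [fS [flin [fl fr]]] [gS [glin [gl gr]]].
split; [|split; [|split]] => /=.
- by move=> x Sx; apply/gS/fS.
- by move=> a x y Sx Sy; rewrite flin // glin //; apply: fS.
- by move=> x y Sx Sy; rewrite fl // gl //; apply: fS.
- by move=> x y Sx Sy; rewrite fr // gr //; apply: fS.
Qed.

Section FullHom.
Variables (V W : lmodType k) (l r : V -> V -> V) (l' r' : W -> W -> W).
Variable h : V -> W.
Hypothesis hom_h : dialg_hom (full_dialg l r) (full_dialg l' r') h.

Let hlin : forall (a : k) x y, h (a *: x + y) = a *: h x + h y.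
Proof. by move=> a x y; apply: (proj1 (proj2 hom_h)). Qed.

Lemma full_hom_plusl x y :
  h (2%:R^-1 *: (l x y + r y x)) = 2%:R^-1 *: (l' (h x) (h y) + r' (h y) (h x)).
Proof.
have [_ [_ [hl hr]]] := hom_h.
by rewrite comb_linear_scaleD // (hl x y I I) (hr y x I I).
Qed.

Lemma full_hom_plusr x y :
  h (2%:R^-1 *: (r x y + l y x)) = 2%:R^-1 *: (r' (h x) (h y) + l' (h y) (h x)).
Proof.
have [_ [_ [hl hr]]] := hom_h.
by rewrite comb_linear_scaleD // (hr x y I I) (hl y x I I).
Qed.

Lemma full_hom_plus (S : V -> Prop) (T : W -> Prop) :
  (forall v, S v -> T (h v)) -> dialg_hom (plus_dialg l r S) (plus_dialg l' r' T) h.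
Proof.
move=> hST; split; [|split; [|split]] => /= *.
- exact: hST.
- exact: hlin.
- exact: full_hom_plusl.
- exact: full_hom_plusr.
Qed.

Lemma full_hom_gen_plus (E : V -> Prop) (T : W -> Prop) :
  closed_dialg (plus_dialg l' r' T) -> (forall e, E e -> T (h e)) ->
  forall v, gen_plus l r E v -> T (h v).
Proof.
move=> [T0 [Tlin [Tl Tr]]] hET v Gv; apply: (Gv (fun v => T (h v))) => //.
split; [|split; [|split]] => /= *.
- by rewrite (comb_linear0 hlin).
- by rewrite hlin; apply: Tlin.
- by rewrite full_hom_plusl; apply: Tl.
- by rewrite full_hom_plusr; apply: Tr.
Qed.

End FullHom.

Lemma DiSJ_is_dialg (X : Type) (D : lmodType k) (l r : D -> D -> D) (iota : X -> D) :
  is_assoc_dialg (full_dialg l r) -> is_dialg (DiSJ l r iota).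
Proof. by move=> [Dl _]; apply: plus_dialg_is_dialg => //; apply: gen_plus_closed. Qed.

Lemma DiSJ_HomDiSJ (X : Type) (D : lmodType k) (l r : D -> D -> D) (iota : X -> D) :
  is_assoc_dialg (full_dialg l r) -> HomDiSJ (DiSJ l r iota).
Proof.
move=> Das; split; first exact: DiSJ_is_dialg.
exists D, l, r, (gen_plus l r (fun v => exists x, v = iota x)).
do 2 split => //; first exact: DiSJ_is_dialg.
exists id; split; last by move=> y Sy; exists y.
by split; [|split; [|split]].
Qed.

End PlusDialgebras.

Theorem mainTheorem17 (k : fieldType) (hk : [pchar k] =i pred0)
    (X : Type) (D : lmodType k) (l r : D -> D -> D) (iota : X -> D)
    (hfree : is_free_DiAs l r iota) :
  HomDiSJ (DiSJ l r iota) /\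
  forall J' : dialg k, HomDiSJ J' ->
    forall g : X -> dcar J', (forall x, dsub J' (g x)) ->
      exists h : D -> dcar J',
        dialg_hom (DiSJ l r iota) J' h /\ forall x, h (iota x) = g x.
Proof.
have [Das univ] := hfree.
split; first exact: DiSJ_HomDiSJ.
move=> J' [_ [A [l' [r' [S [Aas [Sdialg [f [hom_f f_onto]]]]]]]]] g Jg.
have lift x : {a | S a /\ f a = g x}.
  by apply: constructive_indefinite_description; apply: f_onto.
have [h [[hom_h h_iota] _]] := univ A l' r' Aas (fun x => sval (lift x)).
have h_gen : forall v, gen_plus l r (fun v => exists x, v = iota x) v -> S (h v).
  apply: (full_hom_gen_plus hom_h (proj1 Sdialg)).
  by move=> _ [x ->]; rewrite h_iota; case: (svalP (lift x)).
exists (f \o h); split.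
- exact: dialg_hom_comp (full_hom_plus hom_h h_gen) hom_f.
- by move=> x; rewrite /= h_iota; case: (svalP (lift x)).
Qed.
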